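(* Let $K\subset\mathbb{R}^3$ be a convex body with $K=-K$, let $L=\mathrm{lin}(\{e_1,e_2\})$, and let $r>0$ be such that $r\,\mathrm{B}_{2,L}\subset K|L$. Then there exist points $p_1,p_2,p_3\in L$ such that $\mathrm{conv}(\{\pm p_i:i=1,2,3\})$ is a regular hexagon inscribed in $r\,\mathrm{B}_{2,L}$ (all its vertices lie on the circle of radius $r$ centered at $0$ in $L$), and points $q_1,q_2,q_3\in K$ with $-q_1,-q_2,-q_3\in K$, such that $q_i|L=p_i$ (hence $(-q_i)|L=-p_i$) for $i=1,2,3$, and $\dim\mathrm{conv}(\{\pm q_i:i=1,2,3\})=2$.
   Context: A convex body is a compact convex subset of $\mathbb{R}^3$. $e_1,e_2,e_3$ are the canonical unit vectors, $\mathrm{B}_{2,L}=\mathrm{B}_3\cap L$ is the Euclidean unit disc of $L$, and $K|L$ is the orthogonal projection of $K$ onto $L$. *)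

From HB Require Import structures.
From mathcomp Require Import all_boot all_order all_algebra.
From mathcomp Require Import all_classical all_reals all_analysis.
Set Implicit Arguments. Unset Strict Implicit. Unset Printing Implicit Defensive.
Import Order.TTheory GRing.Theory Num.Theory.
Local Open Scope classical_set_scope.
Local Open Scope ring_scope.

Definition convex3 {R : realType} (K : set 'rV[R]_3) : Prop :=
  forall x y, K x -> K y -> forall t : R, 0 <= t <= 1 -> K (t *: x + (1 - t) *: y).

Definition convex_body {R : realType} (K : set 'rV[R]_3) : Prop :=
  @compact 'rV[R^o]_3 K /\ convex3 K.

(* L = lin{e1,e2}: the third coordinate vanishes *)
Definition inL {R : realType} (x : 'rV[R]_3) : Prop := x ord0 2%:R = 0.

Definition projL {R : realType} (x : 'rV[R]_3) : 'rV[R]_3 :=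
  \row_(j < 3) (if j == 2%:R :> 'I_3 then 0 else x ord0 j).

Definition rdisc {R : realType} (r : R) : set 'rV[R]_3 :=
  [set x | inL x /\ (x ord0 0) ^+ 2 + (x ord0 1) ^+ 2 <= r ^+ 2].

Definition projKL {R : realType} (K : set 'rV[R]_3) : set 'rV[R]_3 := projL @` K.

Definition hexv {R : realType} (r th : R) (k : nat) : 'rV[R]_3 :=
  \row_(j < 3) [:: r * cos (th + k%:R * pi / 3); r * sin (th + k%:R * pi / 3); 0]`_j.

(* conv{±p1,±p2,±p3} is a regular hexagon inscribed in r B_{2,L}: the six points
   ±p_i are exactly the vertices of such a hexagon *)
Definition reg_hexagon_inscribed {R : realType} (r : R) (p1 p2 p3 : 'rV[R]_3) : Prop :=
  exists th : R, forall x : 'rV[R]_3,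
    (x = p1 \/ x = - p1 \/ x = p2 \/ x = - p2 \/ x = p3 \/ x = - p3) <->
    exists k : 'I_6, x = hexv r th k.

(* dimension of the affine hull (= dimension of the convex hull) of a finite
   point set: rank of the differences with the first point *)
Definition affdim {R : realType} (s : seq 'rV[R]_3) : nat :=
  match s with
  | [::] => 0
  | x :: t => \rank (\matrix_(i < size t) (nth 0 t i - x))
  end.

(* The vertices v_k of a regular hexagon inscribed in r B_{2,L} satisfy
   v_1 = v_0 + v_2 and v_(k+3) = - v_k.  Lift v_0, v_1, v_2 to points a, b, c
   of K, as r B_{2,L} is contained in K|L.  If the heights satisfy
   b_3 = a_3 + c_3 then b = a + c, so the points +-a, +-b, +-c span the plane
   of a and c, which is 2-dimensional since a|L and c|L are independent.
   Rotating the hexagon by pi/3 turns the lift (a, b, c) into the lift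
   (b, c, -a), which changes the sign of the defect b_3 - a_3 - c_3.  The pairs
   (angle, lift) with angle in [0, pi/3] form a compact set with convex
   fibres, so by connectedness of [0, pi/3] some fibre contains lifts with
   defects of both signs, and a convex combination of them has defect 0. *)

From HB Require Import structures.
From mathcomp Require Import all_boot all_order all_algebra.
From mathcomp Require Import all_classical all_reals all_analysis.
From mathcomp Require Import ring lra.
Import Order.TTheory GRing.Theory Num.Theory.
Import numFieldNormedType.Exports.
Local Open Scope classical_set_scope.
Local Open Scope ring_scope.

Section hexagon.
Context {R : realType}.
Implicit Types (r t : R) (x y : 'rV[R]_3).

Lemma cos_pi3 : cos (pi / 3 : R) = 1 / 2.
Proof.
have pi_gt0 := pi_gt0 R.
have c_gt0 : 0 < cos (pi / 3 : R) by apply: cos_gt0_pihalf; lra.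
have cos_2pi3 : cos (pi / 3 + pi / 3 : R) = - cos (pi / 3).
  by rewrite -[in RHS]cosN -cosDpi; congr cos; field.
move: cos_2pi3; rewrite cosD.
have := cos2Dsin2 (pi / 3 : R).
move: (cos _) (sin _) c_gt0 => c s c_gt0 /[!expr2] cs1 cos_double.
have : (2 * c - 1) * (c + 1) = 0 by nra.
move/eqP; rewrite mulf_eq0 => /orP[] /eqP; lra.
Qed.

Lemma cos_sum_pi3 t : cos (t - pi / 3) + cos (t + pi / 3) = cos t.
Proof. by rewrite cosB cosD cos_pi3; field. Qed.

Lemma sin_sum_pi3 t : sin (t - pi / 3) + sin (t + pi / 3) = sin t.
Proof. by rewrite sinB sinD cos_pi3; field. Qed.

Lemma hexvE r t k (j : 'I_3) :
  hexv r t k ord0 j = [:: r * cos (t + k%:R * pi / 3); r * sin (t + k%:R * pi / 3); 0]`_j.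
Proof. by rewrite mxE. Qed.

Lemma hexvS r t k : hexv r (t + pi / 3) k = hexv r t k.+1.
Proof.
have shift : t + pi / 3 + k%:R * pi / 3 = t + k.+1%:R * pi / 3.
  by rewrite -addn1 natrD; field.
by apply/rowP => j; rewrite !mxE shift.
Qed.

Lemma hexvD3 r t k : hexv r t (k + 3) = - hexv r t k.
Proof.
apply/rowP => j; rewrite !mxE natrD.
have -> : t + (k%:R + 3%:R) * pi / 3 = t + k%:R * pi / 3 + pi by field.
by case: j => [[|[|[|//]]] ?] /=; rewrite ?cosDpi ?sinDpi ?mulrN ?oppr0.
Qed.

Lemma hexv1 r t : hexv r t 1 = hexv r t 0 + hexv r t 2.
Proof.
apply/rowP => j; rewrite !mxE.
case: j => [[|[|[|//]]] ?] /=; rewrite ?addr0 // -mulrDr.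
- by rewrite -(cos_sum_pi3 (t + 1 * pi / 3)); congr (_ * (cos _ + cos _)); field.
- by rewrite -(sin_sum_pi3 (t + 1 * pi / 3)); congr (_ * (sin _ + sin _)); field.
Qed.

Lemma hexv_rdisc r t k : rdisc r (hexv r t k).
Proof.
by split; rewrite /inL !hexvE //= !exprMn -mulrDr cos2Dsin2 mulr1.
Qed.

Lemma hexv_cross_gt0 r t : 0 < r ->
  0 < hexv r t 0 ord0 0 * hexv r t 2 ord0 1 - hexv r t 0 ord0 1 * hexv r t 2 ord0 0.
Proof.
move=> r_gt0; rewrite !hexvE /= !mul0r addr0.
have -> : r * cos t * (r * sin (t + 2 * pi / 3)) - r * sin t * (r * cos (t + 2 * pi / 3))
    = r ^+ 2 * sin (t + 2 * pi / 3 - t) by rewrite sinB; ring.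
rewrite mulr_gt0 ?exprn_gt0 // (_ : t + _ - t = 2 * pi / 3); last by ring.
by apply: sin_gt0_pi; have := pi_gt0 R; lra.
Qed.

Lemma hexv_coord_continuous r k (j : 'I_3) : continuous (fun t => hexv r t k ord0 j).
Proof.
have trig (h : R -> R) : continuous h -> continuous (fun t => r * h (t + k%:R * pi / 3)).
  move=> ch t; apply: cvgM; first exact: cvg_cst.
  apply: continuous_comp; last exact: ch.
  by apply: cvgD; [exact: cvg_id | exact: cvg_cst].
under eq_fun do rewrite mxE.
case: j => [[|[|[|//]]] ?].
- exact: (trig _ (@continuous_cos R)).
- exact: (trig _ (@continuous_sin R)).
- by move=> t; exact: cvg_cst.
Qed.

Lemma reg_hexagon_inscribed_hexv r t :
  reg_hexagon_inscribed r (hexv r t 0) (hexv r t 1) (hexv r t 2).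
Proof.
exists t => x; split.
  case=> [->|[->|[->|[->|[->|->]]]]].
  - by exists (@Ordinal 6 0 isT).
  - by exists (@Ordinal 6 3 isT); rewrite -(hexvD3 r t 0).
  - by exists (@Ordinal 6 1 isT).
  - by exists (@Ordinal 6 4 isT); rewrite -(hexvD3 r t 1).
  - by exists (@Ordinal 6 2 isT).
  - by exists (@Ordinal 6 5 isT); rewrite -(hexvD3 r t 2).
case=> -[[|[|[|[|[|[|//]]]]]] ?] ->.
- by left.
- by do 2 right; left.
- by do 4 right; left.
- by right; left; rewrite (hexvD3 r t 0).
- by do 3 right; left; rewrite (hexvD3 r t 1).
- by do 5 right; rewrite (hexvD3 r t 2).
Qed.

End hexagon.

Lemma det_mx22 {R : comPzRingType} (A : 'M[R]_2) :
  \det A = A 0 0 * A 1 1 - A 0 1 * A 1 0.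
Proof.
rewrite (expand_det_row _ 0) !big_ord_recl big_ord0 /cofactor !det_mx11 !mxE /=.
have lift00 : lift 0 0 = 1 :> 'I_2 by apply: val_inj.
have lift10 : lift 1 0 = 0 :> 'I_2 by apply: val_inj.
rewrite lift00 lift10 /= expr0 expr1 mulN1r mul1r addr0 mulrN.
by congr (A _ _ * _ - _); apply: val_inj.
Qed.

Lemma det_col_mx2 {R : comPzRingType} (u v : 'rV[R]_2) :
  \det (col_mx u v) = u 0 0 * v 0 1 - u 0 1 * v 0 0.
Proof.
rewrite det_mx22 !mxE.
case: splitP => i /eqP; rewrite (ord1 i) //= => _.
by case: splitP => j /eqP; rewrite (ord1 j).
Qed.

Lemma rank_col_mx2 {F : fieldType} (a c : 'rV[F]_3) :
  a ord0 0 * c ord0 1 - a ord0 1 * c ord0 0 != 0 -> \rank (col_mx a c) = 2.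
Proof.
move=> cross_neq0; apply/eqP; rewrite eqn_leq rank_leq_row /=.
pose P : 'M[F]_(3, 2) := pid_mx 2.
have pidE (u : 'rV[F]_3) : (u *m P) 0 0 = u ord0 0 /\ (u *m P) 0 1 = u ord0 1.
  rewrite !mxE !big_ord_recl !big_ord0 !mxE /= !mulr1 !mulr0 !addr0 ?add0r.
  by split; congr (u _ _); apply: val_inj.
have unit_minor : col_mx a c *m P \in unitmx.
  have [[a0 a1] [c0 c1]] := (pidE a, pidE c).
  by rewrite mul_col_mx unitmxE det_col_mx2 a0 a1 c0 c1 unitfE.
by have := mxrankM_maxl (col_mx a c) P; rewrite (mxrank_unit unit_minor).
Qed.

Lemma affdim_hexagon {R : realType} (a c : 'rV[R]_3) :
  affdim [:: a; - a; a + c; - (a + c); c; - c] = \rank (col_mx a c).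
Proof.
rewrite /=; apply/eqmx_rank; set A := \matrix_(i < 5) _.
have a_sub : (a <= col_mx a c)%MS by rewrite -addsmxE addsmxSl.
have c_sub : (c <= col_mx a c)%MS by rewrite -addsmxE addsmxSr.
apply/andP; split.
  apply/row_subP => i; rewrite rowK.
  case: i => [[|[|[|[|[|//]]]]] ?] /=;
    by do ?[apply: addmx_sub | rewrite eqmx_opp].
rewrite col_mx_sub; apply/andP; split.
  have -> : a = (- 2^-1) *: row 0 A.
    by apply/rowP => j; rewrite !mxE /=; field.
  exact/scalemx_sub/row_sub.
have -> : c = row 1 A by apply/rowP => j; rewrite !mxE /=; ring.
exact: row_sub.
Qed.

Section intermediate_value.
Context {R : realFieldType}.

Lemma closed_eqfun (T : topologicalType) (f g : T -> R) :
  continuous f -> continuous g -> closed [set x | f x = g x].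
Proof.
move=> cf cg; have -> : [set x | f x = g x] = (f \- g) @^-1` [set 0].
  apply/seteqP; split => x /=; first by move->; rewrite subrr.
  by move/eqP; rewrite subr_eq0 => /eqP.
apply: preimage_closed; last exact: closed_eq.
by move=> x _; apply: cvgB; [exact: cf | exact: cg].
Qed.

Lemma IVT_compact_graph {Y X : topologicalType} {I : set Y} {G : set (Y * X)}
    {f : X -> R} :
  hausdorff_space Y -> connected I -> compact G -> continuous f -> fst @` G = I ->
  (exists2 p, G p & 0 <= f p.2) -> (exists2 p, G p & f p.2 <= 0) ->
  (forall t x y, G (t, x) -> G (t, y) -> 0 <= f x -> f y <= 0 ->
    exists2 z, G (t, z) & f z = 0) ->
  exists t z, G (t, z) /\ f z = 0.
Proof.
move=> hY cI cG cf GI [p0 Gp0 fp0] [p1 Gp1 fp1] fiber_zero.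
pose S (b : bool) : set R := if b then [set x | x <= 0] else [set x | 0 <= x].
pose E (b : bool) := fst @` (G `&` (f \o snd) @^-1` S b).
have closedE b : closed (E b).
  apply: compact_closed hY _; apply: continuous_compact.
    by apply: continuous_subspaceT => p; exact: cvg_fst.
  apply: compact_closedI cG _; apply: preimage_closed.
    by move=> p _; apply: continuous_comp; [exact: cvg_snd | exact: cf].
  by case: b; [exact: closed_le | exact: closed_ge].
have [t [Et0 Et1]] : exists t, E false t /\ E true t.
  apply: contrapT => disjE; apply: (connectedPn I).2 cI; exists E; split.
  - by case; [exists p1.1, p1 | exists p0.1, p0].
  - rewrite -GI; apply/seteqP; split => [_ [p Gp <-]|_ [] [p [Gp _] <-]];
      try by exists p.
    by have [fp|/ltW fp] := leP 0 (f p.2); [left|right]; exists p.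
  - rewrite /separated -!(proj1 (closure_id _) (closedE _)).
    by split; apply/seteqP; split => // s [Es0 Es1]; apply: disjE; exists s.
have [[t0 x] [Gx fx] /= t0E] := Et0; have [[t1 y] [Gy fy] /= t1E] := Et1.
subst t0 t1; have [z Gz fz] := fiber_zero _ _ _ Gx Gy fx fy.
by exists t, z.
Qed.

End intermediate_value.

Lemma convex_comb_eq0 {R : realFieldType} (x y : R) :
  y <= 0 -> 0 <= x -> exists2 l, 0 <= l <= 1 & l * x + (1 - l) * y = 0.
Proof.
move=> y_le0 x_ge0; have [xy|xy] := eqVneq x y.
  by exists 0; rewrite ?lexx ?ler01 //; lra.
have xy_gt0 : 0 < x - y by rewrite lt_neqAle subr_ge0 eq_sym subr_eq0 xy; lra.
exists (- y / (x - y)); last by field; rewrite gt_eqF.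
apply/andP; split; first by rewrite divr_ge0 ?oppr_ge0 // ltW.
by rewrite ler_pdivrMr // mul1r; lra.
Qed.

Section hexagonal_lifts.
Context {R : realType}.
Local Notation V := 'rV[R]_3.
Implicit Types (t : R) (x y : V) (q : V * V * V).

Lemma projL_is_linear : linear (@projL R).
Proof.
by move=> l x y; apply/rowP => j; rewrite !mxE; case: ifP; rewrite ?mulr0 ?addr0.
Qed.

HB.instance Definition _ :=
  GRing.isLinear.Build R V V _ (@projL R) projL_is_linear.

Lemma projL_coord x : projL x ord0 0 = x ord0 0 /\ projL x ord0 1 = x ord0 1.
Proof. by rewrite !mxE. Qed.

Lemma projL_height_inj x y :
  projL x = projL y -> x ord0 2%:R = y ord0 2%:R -> x = y.
Proof.
move=> /rowP projLxy xy2; apply/rowP => j; have := projLxy j; rewrite !mxE.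
by case: ifP => [/eqP -> _ | _ ->]; rewrite ?ord1.
Qed.

Definition lift_defect q : R :=
  q.1.2 ord0 2%:R - q.1.1 ord0 2%:R - q.2 ord0 2%:R.

Lemma lift_defect_continuous : continuous lift_defect.
Proof.
have height (f : V * V * V -> V) : continuous f -> continuous (fun q => f q ord0 2%:R).
  move=> cf q; apply: (@continuous_comp _ _ _ f (fun v : V => v ord0 2%:R)).
    exact: cf.
  exact: coord_continuous.
move=> q; apply: cvgB; first apply: cvgB.
- apply: (height (snd \o fst)) => ?.
  by apply: continuous_comp; [exact: cvg_fst | exact: cvg_snd].
- by apply: (height (fst \o fst)) => ?; apply: continuous_comp; exact: cvg_fst.
- by apply: (height snd) => ?; exact: cvg_snd.
Qed.

Variables (K : set V) (r : R).

Definition hexlift t q :=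
  [/\ projL q.1.1 = hexv r t 0, projL q.1.2 = hexv r t 1 & projL q.2 = hexv r t 2].

Definition hexlifts : set (R * (V * V * V)) :=
  (`[0, pi / 3] `*` (K `*` K `*` K)) `&` [set p | hexlift p.1 p.2].

Lemma lift_defect0_add t a b c :
  hexlift t (a, b, c) -> lift_defect (a, b, c) = 0 -> b = a + c.
Proof.
move=> [/= pa pb pc] /eqP; rewrite subr_eq0 subr_eq => /eqP b2.
apply: projL_height_inj; first by rewrite linearD /= pa pb pc hexv1.
by rewrite mxE b2 addrC.
Qed.

Lemma hexlift_rot t a b c :
  hexlift t (a, b, c) -> hexlift (t + pi / 3) (b, c, - a).
Proof.
move=> [/= pa pb pc]; split => /=; rewrite hexvS //.
by rewrite linearN /= pa -hexvD3.
Qed.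

Lemma lift_defect_rot a b c : lift_defect (b, c, - a) = - lift_defect (a, b, c).
Proof. by rewrite /lift_defect /= mxE; ring. Qed.

Lemma lift_defect_comb l q q' :
  lift_defect (l *: q + (1 - l) *: q') = l * lift_defect q + (1 - l) * lift_defect q'.
Proof. by rewrite /lift_defect /= !mxE; ring. Qed.

Lemma hexlift_comb t l q q' :
  hexlift t q -> hexlift t q' -> hexlift t (l *: q + (1 - l) *: q').
Proof.
have comb h x x' : projL x = h -> projL x' = h -> projL (l *: x + (1 - l) *: x') = h.
  by move=> px px'; rewrite linearD !linearZ /= px px' -scalerDl addrC subrK scale1r.
by move=> [? ? ?] [? ? ?]; split; apply: comb.
Qed.

Lemma closed_projL_hexv (X : topologicalType) (g : X -> V) k :
  continuous g -> closed [set p : R * X | projL (g p.2) = hexv r p.1 k].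
Proof.
move=> cg.
have -> : [set p : R * X | projL (g p.2) = hexv r p.1 k] =
    \bigcap_(j in setT) [set p | projL (g p.2) ord0 j = hexv r p.1 k ord0 j].
  apply/seteqP; split => [p /= pg j _|p /= coords]; first by rewrite /= pg.
  by apply/rowP => j; exact: coords.
apply: closed_bigI => j _; apply: closed_eqfun.
  under eq_fun do rewrite mxE.
  case: eqP => _ p; first exact: cvg_cst.
  apply: (@continuous_comp _ _ _ (g \o snd) (fun v : V => v ord0 j)).
    by apply: continuous_comp; [exact: cvg_snd | exact: cg].
  exact: coord_continuous.
move=> p; apply: (@continuous_comp _ _ _ fst (fun t => hexv r t k ord0 j)).
  exact: cvg_fst.
exact: hexv_coord_continuous.
Qed.

Lemma compact_hexlifts :
  @compact 'rV[R^o]_3 K -> compact hexlifts.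
Proof.
move=> cK; apply: compact_closedI.
  apply: compact_setX; first exact: segment_compact.
  by apply: compact_setX => //; apply: compact_setX.
have -> : [set p | hexlift p.1 p.2] =
    [set p | projL p.2.1.1 = hexv r p.1 0] `&` [set p | projL p.2.1.2 = hexv r p.1 1]
    `&` [set p | projL p.2.2 = hexv r p.1 2].
  by apply/seteqP; split => p /=; [case | case=> -[]].
apply: closedI; first apply: closedI.
- apply: (closed_projL_hexv _ (fst \o fst)) => q.
  by apply: continuous_comp; exact: cvg_fst.
- apply: (closed_projL_hexv _ (snd \o fst)) => q.
  by apply: continuous_comp; [exact: cvg_fst | exact: cvg_snd].
- by apply: (closed_projL_hexv _ snd) => q; exact: cvg_snd.
Qed.

Hypotheses (Kconvex : convex3 K) (Kdisc : rdisc r `<=` projKL K).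

Lemma hexlifts_fst : fst @` hexlifts = `[0, pi / 3]%classic.
Proof.
apply/seteqP; split => [_ [p [[? _] _] <-] //|t t_itv].
have lift k : exists2 x, K x & projL x = hexv r t k.
  by have [x Kx px] := Kdisc _ (hexv_rdisc r t k); exists x.
have [a Ka pa] := lift 0%N; have [b Kb pb] := lift 1%N; have [c Kc pc] := lift 2%N.
by exists (t, (a, b, c)).
Qed.

Lemma hexlifts_fiber_zero t q q' :
  hexlifts (t, q) -> hexlifts (t, q') -> 0 <= lift_defect q -> lift_defect q' <= 0 ->
  exists2 z, hexlifts (t, z) & lift_defect z = 0.
Proof.
move=> [[t_itv [[Ka Kb] Kc]] hq] [[_ [[Ka' Kb'] Kc']] hq'] dq dq'.
have [l l01 dl] := convex_comb_eq0 _ _ dq' dq.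
exists (l *: q + (1 - l) *: q'); last by rewrite lift_defect_comb.
by split; [split=> //; split; [split|]; exact: Kconvex | exact: hexlift_comb].
Qed.

Hypotheses (Kcompact : @compact 'rV[R^o]_3 K) (Ksym : forall x, K x -> K (- x)).

Lemma exists_flat_hexlift :
  exists t a b c, [/\ K a, K b & K c] /\ hexlift t (a, b, c) /\ b = a + c.
Proof.
have pi_gt0 := pi_gt0 R.
have I0 : `[0, pi / 3]%classic (0 : R) by rewrite /= in_itv /= lexx; lra.
have I1 : `[0, pi / 3]%classic (pi / 3 : R) by rewrite /= in_itv /= lexx andbT; lra.
have [[t0 [[a b] c]] [[_ [[Ka Kb] Kc]] hq] /= t0E] : (fst @` hexlifts) 0.
  by rewrite hexlifts_fst.
subst t0; have /hexlift_rot := hq; rewrite add0r => hq'.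
have Lq : hexlifts (0, (a, b, c)) by [].
have Lq' : hexlifts (pi / 3, (b, c, - a)) by do !split => //; exact: Ksym.
have [sign_ge0 sign_le0] : (exists2 p, hexlifts p & 0 <= lift_defect p.2) /\
                            (exists2 p, hexlifts p & lift_defect p.2 <= 0).
  have := lift_defect_rot a b c.
  have [d_ge0 dE|/ltW d_le0 dE] := leP 0 (lift_defect (a, b, c)).
    by split; [exists (0, (a, b, c)) | exists (pi / 3, (b, c, - a)); rewrite //= dE oppr_le0].
  by split; [exists (pi / 3, (b, c, - a)); rewrite //= dE oppr_ge0 | exists (0, (a, b, c))].
have [t [[[a' b'] c'] [[[_ [[Ka' Kb'] Kc']] hz] d0]]] :=
  IVT_compact_graph (@Rhausdorff R) (@segment_connected R 0 (pi / 3))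
    (compact_hexlifts Kcompact) lift_defect_continuous hexlifts_fst sign_ge0 sign_le0 hexlifts_fiber_zero.
by exists t, a', b', c'; split => //; split => //; exact: lift_defect0_add hz d0.
Qed.

End hexagonal_lifts.

Theorem lemma2p1 (R : realType) (K : set 'rV[R]_3) (r : R) :
  convex_body K ->
  (forall x, K x -> K (- x)) ->
  0 < r ->
  rdisc r `<=` projKL K ->
  exists p1 p2 p3 : 'rV[R]_3,
    [/\ inL p1, inL p2, inL p3 & reg_hexagon_inscribed r p1 p2 p3] /\
    exists q1 q2 q3 : 'rV[R]_3,
      [/\ K q1, K q2 & K q3] /\ [/\ K (- q1), K (- q2) & K (- q3)] /\
      [/\ projL q1 = p1, projL q2 = p2 & projL q3 = p3] /\
      affdim [:: q1; - q1; q2; - q2; q3; - q3] = 2%N.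
Proof.
move=> [Kcompact Kconvex] Ksym r_gt0 Kdisc.
have [t [a [b [c [[Ka Kb Kc] [[pa pb pc] bE]]]]]] :=
  exists_flat_hexlift K r Kconvex Kdisc Kcompact Ksym.
exists (hexv r t 0), (hexv r t 1), (hexv r t 2); split.
  by split; [exact: (hexv_rdisc r t _).1 .. | exact: reg_hexagon_inscribed_hexv].
exists a, b, c; do !split => //; try exact: Ksym.
rewrite bE affdim_hexagon rank_col_mx2 //.
have [[a0 a1] [c0 c1]] := (projL_coord a, projL_coord c).
by rewrite -a0 -a1 -c0 -c1 pa pc lt0r_neq0 // hexv_cross_gt0.
Qed.
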